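(* Let $n>3$. Let $\mu_{1,1}^n$ be the complex commutative associative algebra with basis $e_1,\dots,e_n$ and only nonzero products $e_i\cdot e_j=e_{i+j}$ for $2\le i+j\le n-1$, and let $\mu_{1,2}^n$ be the one with only nonzero products $e_i\cdot e_j=e_{i+j}$ for $2\le i+j\le n-1$ and $e_n\cdot e_n=e_{n-1}$. Then: (1) if $(\mathcal{P},\cdot)=\mu_{1,1}^n$, then $Z^{2}(\mathcal{P},\mathcal{P})=\{\alpha\Delta_{1,n}(-,-)e_{n-1}+\beta\Delta_{1,n}(-,-)e_n:\alpha,\beta\in\mathbb{C}\}$; (2) if $(\mathcal{P},\cdot)=\mu_{1,2}^n$, then $Z^{2}(\mathcal{P},\mathcal{P})=\{\alpha\Delta_{1,n}(-,-)e_{n-1}:\alpha\in\mathbb{C}\}$.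
   Context: For a commutative associative algebra $(\mathcal{P},\cdot)$, $Z^{2}(\mathcal{P},\mathcal{P})$ is the set of all skew-symmetric bilinear maps $\theta:\mathcal{P}\times\mathcal{P}\to\mathcal{P}$ such that $\theta(\theta(x,y),z)+\theta(\theta(y,z),x)+\theta(\theta(z,x),y)=0$ and $\theta(x\cdot y,z)-\theta(x,z)\cdot y-x\cdot\theta(y,z)=0$ for all $x,y,z$. $\Delta_{1,n}$ denotes the skew-symmetric bilinear form with $\Delta_{1,n}(e_1,e_n)=1$, $\Delta_{1,n}(e_n,e_1)=-1$, and $\Delta_{1,n}(e_l,e_m)=0$ for all other pairs of basis vectors. *)

From HB Require Import structures.
From mathcomp Require Import all_boot all_order all_algebra.
From mathcomp Require Import reals complex.
Set Implicit Arguments. Unset Strict Implicit. Unset Printing Implicit Defensive.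
Import Order.TTheory GRing.Theory Num.Theory.
Local Open Scope ring_scope.

(* Complex numbers: R[i] for an arbitrary R : realType (any complete
   archimedean ordered field, i.e. a model of the reals). *)

(* The underlying space C^n with basis e_1,...,e_n; vectors are row vectors
   'rV[K]_n, and the basis vector e_k (1-based k) has a 1 at position k-1. *)
Definition bvec (K : pzRingType) (n k : nat) : 'rV[K]_n :=
  \row_(j < n) (if j.+1 == k then 1 else 0).

(* Bilinear extension of structure constants c i j k (1-based indices):
   e_i * e_j = sum_k c i j k e_k. *)
Definition bilin_of (K : pzRingType) (n : nat) (c : nat -> nat -> nat -> K)
  (x y : 'rV[K]_n) : 'rV[K]_n :=
  \row_(k < n) \sum_(i < n) \sum_(j < n) x 0 i * y 0 j * c i.+1 j.+1 k.+1.

Definition mu11_c (K : pzRingType) (n : nat) (i j k : nat) : K :=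
  if [&& 2 <= i + j, i + j <= n.-1 & k == i + j]%N then 1 else 0.

Definition mu12_c (K : pzRingType) (n : nat) (i j k : nat) : K :=
  if [&& 2 <= i + j, i + j <= n.-1 & k == i + j]%N then 1
  else if [&& i == n, j == n & k == n.-1]%N then 1 else 0.

Definition mu11 (K : pzRingType) (n : nat) := @bilin_of K n (@mu11_c K n).
Definition mu12 (K : pzRingType) (n : nat) := @bilin_of K n (@mu12_c K n).

Definition Delta_c (K : pzRingType) (n l m : nat) : K :=
  (if ((l == 1) && (m == n))%N then 1 else 0) - (if ((l == n) && (m == 1))%N then 1 else 0).

Definition Delta1n (K : pzRingType) (n : nat) (x y : 'rV[K]_n) : K :=
  \sum_(l < n) \sum_(m < n) x 0 l * y 0 m * Delta_c K n l.+1 m.+1.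

Definition in_Z2 (K : pzRingType) (n : nat)
  (mul theta : 'rV[K]_n -> 'rV[K]_n -> 'rV[K]_n) : Prop :=
  [/\ (forall (a : K) x y z, theta (a *: x + y) z = a *: theta x z + theta y z),
      (forall (a : K) x y z, theta x (a *: y + z) = a *: theta x y + theta x z),
      (forall x y, theta x y = - theta y x),
      (forall x y z, theta (theta x y) z + theta (theta y z) x
                     + theta (theta z x) y = 0) &
      (forall x y z, theta (mul x y) z - mul (theta x z) y - mul x (theta y z) = 0)].

From HB Require Import structures.
From mathcomp Require Import all_boot all_order all_algebra.
From mathcomp Require Import reals complex.
From mathcomp Require Import ring zify.

(* For theta in Z^2, the Leibniz rule applied to e_a = e_1 e_(a-1) (1 < a < n) gives
   theta(e_a, z) = theta(e_1, z) e_(a-1) + e_1 theta(e_(a-1), z), so theta(e_a, z)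
   vanishes by induction on a as soon as theta(e_1, z) annihilates e_1, ..., e_(n-2)
   from both sides.  Starting from theta(e_1, e_1) = 0 this kills theta on
   e_1, ..., e_(n-1).  Leibniz on e_n e_1 = 0 gives w e_1 = 0 for w = theta(e_1, e_n),
   so w lies in the span of e_(n-1) and e_n, which annihilates e_1, ..., e_(n-2); hence
   theta(e_a, e_n) = 0 for 1 < a < n as well, and theta = Delta_(1,n) w by bilinearity.
   In mu_(1,2), Leibniz on e_n e_n = e_(n-1) moreover gives 2 b e_(n-1) = 0 for the
   e_n-coefficient b of w.  Conversely, Delta_(1,n)(-,-) v is a cocycle whenever v
   annihilates the algebra: products have no e_1- or e_n-component, so
   Delta_(1,n)(x y, z) = 0, and the Jacobi identity holds because Delta_(1,n) has
   rank 2. *)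

Set Implicit Arguments.
Unset Strict Implicit.
Unset Printing Implicit Defensive.

Import Order.TTheory GRing.Theory Num.Theory.
Local Open Scope ring_scope.

Section Basis.
Variables (K : pzRingType) (n : nat).
Local Notation e := (bvec K n).

Lemma bvec_delta (i : 'I_n) : e i.+1 = delta_mx 0 i.
Proof. by apply/rowP => j; rewrite !mxE eqSS val_eqE eqxx; case: (j == i). Qed.

Lemma row_bvec_sum (x : 'rV[K]_n) : x = \sum_(i < n) x 0 i *: e i.+1.
Proof. by rewrite {1}[x]row_sum_delta; apply: eq_bigr => i _; rewrite bvec_delta. Qed.

Lemma sum_bvec (i : 'I_n) (F : 'I_n -> K) : \sum_(j < n) (e i.+1) 0 j * F j = F i.
Proof.
rewrite (bigD1 i) //= big1 => [|j /negbTE ji]; first by rewrite mxE eqxx mul1r addr0.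
by rewrite mxE eqSS val_eqE ji mul0r.
Qed.

Lemma exists_ord_succ a : (0 < a <= n)%N -> exists i : 'I_n, a = i.+1.
Proof.
move=> ha; have hi : (a.-1 < n)%N by lia.
by exists (Ordinal hi); rewrite /=; lia.
Qed.

Lemma row_span_top2 (x : 'rV[K]_n) : (1 < n)%N ->
  (forall i : 'I_n, (i < n.-2)%N -> x 0 i = 0) -> exists a b, x = a *: e n.-1 + b *: e n.
Proof.
move=> hn hlow; have hn2 : (n.-2 < n)%N by lia. have hn1 : (n.-1 < n)%N by lia.
exists (x 0 (Ordinal hn2)), (x 0 (Ordinal hn1)); apply/rowP => k; rewrite !mxE.
have [hk|hk] := ltnP k n.-2.
  by rewrite hlow // !ifF ?mulr0 ?addr0 //; apply/negbTE/eqP; lia.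
have [->|->] : k = Ordinal hn2 \/ k = Ordinal hn1.
  have := ltn_ord k; case: (ltnP k n.-1) => ? ?;
    [left | right]; apply: val_inj => /=; lia.
- by rewrite ifT ?ifF ?mulr1 ?mulr0 ?addr0 //=; lia.
- by rewrite ifF ?ifT ?mulr1 ?mulr0 ?add0r //=; lia.
Qed.
End Basis.

Lemma bvec_neq0 (K : nzRingType) n a : (0 < a <= n)%N -> bvec K n a != 0.
Proof.
move=> /exists_ord_succ [i ->]; apply/eqP => /rowP/(_ i).
by rewrite !mxE eqxx => /eqP; rewrite oner_eq0.
Qed.

Lemma bilin_of_is_bilinear (K : comNzRingType) (n : nat) (c : nat -> nat -> nat -> K) :
  bilinear_for *:%R *:%R (bilin_of c : 'rV[K]_n -> 'rV[K]_n -> 'rV[K]_n).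
Proof.
split=> z a x y; apply/rowP => k; rewrite !mxE mulr_sumr -big_split;
  apply: eq_bigr => i _ /=; rewrite mulr_sumr -big_split; apply: eq_bigr => j _ /=;
  rewrite !mxE; ring.
Qed.

HB.instance Definition _ (K : comNzRingType) (n : nat) (c : nat -> nat -> nat -> K) :=
  bilinear_isBilinear.Build K _ _ _ _ _ (bilin_of c) (@bilin_of_is_bilinear K n c).

Section BilinOf.
Variables (K : comNzRingType) (n : nat) (c : nat -> nat -> nat -> K).
Local Notation e := (bvec K n).
Local Notation mul := (bilin_of c : 'rV[K]_n -> 'rV[K]_n -> 'rV[K]_n).

Lemma bilin_of_bvecr x (j : 'I_n) :
  mul x (e j.+1) = \row_k \sum_(i < n) x 0 i * c i.+1 j.+1 k.+1.
Proof.
apply/rowP => k; rewrite !mxE; apply: eq_bigr => i _.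
by under eq_bigr => l _ do rewrite -mulrA mulrCA; rewrite sum_bvec.
Qed.

Lemma bilin_of_bvec a b : (0 < a <= n)%N -> (0 < b <= n)%N ->
  mul (e a) (e b) = \row_k c a b k.+1.
Proof.
move=> /exists_ord_succ [i ->] /exists_ord_succ [j ->].
by rewrite bilin_of_bvecr; apply/rowP => k; rewrite !mxE sum_bvec.
Qed.

Lemma mul_bvec a b : (0 < a <= n)%N -> (0 < b <= n)%N -> c a b =1 mu11_c K n a b ->
  mul (e a) (e b) = if (a + b <= n.-1)%N then e (a + b) else 0.
Proof.
move=> ha hb hc; rewrite bilin_of_bvec //.
case: ifP => ?; apply/rowP => k; rewrite !mxE hc /mu11_c;
  by repeat (case: ifP => ?); try done; exfalso; lia.
Qed.

Lemma mul_eq0l u y : (forall j : 'I_n, mul u (e j.+1) = 0) -> mul u y = 0.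
Proof.
move=> hu; rewrite [y]row_bvec_sum linear_sumr big1 // => j _.
by rewrite linearZr_LR /= hu scaler0.
Qed.

Lemma mul_eq0r u x : (forall i : 'I_n, mul (e i.+1) u = 0) -> mul x u = 0.
Proof.
move=> hu; rewrite [x]row_bvec_sum linear_sumlz big1 // => i _.
by rewrite linearZl_LR /= hu scaler0.
Qed.

Lemma mul_bvec_eq0l a y : (0 < a <= n)%N -> (n.-1 <= a)%N ->
  (forall b, c a b =1 mu11_c K n a b) -> mul (e a) y = 0.
Proof.
move=> ha han hc; apply: mul_eq0l => j; have hj := ltn_ord j.
by rewrite (mul_bvec ha _ (hc _)) ?ifF //; lia.
Qed.

Lemma mul_bvec_eq0r a x : (0 < a <= n)%N -> (n.-1 <= a)%N ->
  (forall b, c b a =1 mu11_c K n b a) -> mul x (e a) = 0.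
Proof.
move=> ha han hc; apply: mul_eq0r => i; have hi := ltn_ord i.
by rewrite (mul_bvec _ ha (hc _)) ?ifF //; lia.
Qed.
End BilinOf.

Section Mu11Products.
Variables (K : comNzRingType) (n : nat) (c : nat -> nat -> nat -> K).
Hypothesis n_gt2 : (2 < n)%N.
(* Covers both mu_(1,1) and mu_(1,2), which differ only in e_n e_n. *)
Hypothesis c_mu11 : forall a b, (a != n) || (b != n) -> c a b =1 mu11_c K n a b.
Local Notation e := (bvec K n).
Local Notation mul := (bilin_of c : 'rV[K]_n -> 'rV[K]_n -> 'rV[K]_n).

Lemma mul_bvec_off_nn a b :
  (0 < a <= n)%N -> (0 < b <= n)%N -> (a < n)%N || (b < n)%N ->
  mul (e a) (e b) = if (a + b <= n.-1)%N then e (a + b) else 0.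
Proof. by move=> ha hb hab; rewrite mul_bvec //; apply: c_mu11; lia. Qed.

Lemma mul_bvec1 a : (1 < a < n)%N -> mul (e 1) (e a.-1) = e a.
Proof. by move=> ha; rewrite mul_bvec_off_nn ?add1n ?prednK ?ifT //; lia. Qed.

Lemma mul_bvecn1 : mul (e n) (e 1) = 0.
Proof. by rewrite mul_bvec_off_nn ?ifF //; lia. Qed.

Lemma mul_top_bvec a b k : (0 < k <= n.-2)%N -> mul (a *: e n.-1 + b *: e n) (e k) = 0.
Proof.
by move=> hk; rewrite linearDl !linearZl_LR /= !mul_bvec_off_nn ?ifF ?scaler0 ?addr0 //; lia.
Qed.

Lemma mul_bvec_top a b k : (0 < k <= n.-2)%N -> mul (e k) (a *: e n.-1 + b *: e n) = 0.
Proof.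
by move=> hk; rewrite linearDr !linearZr_LR /= !mul_bvec_off_nn ?ifF ?scaler0 ?addr0 //; lia.
Qed.

Lemma mul_bvec1_shift x (i j : 'I_n) : j = i.+1 :> nat -> (i.+2 < n)%N ->
  (mul x (e 1)) 0 j = x 0 i.
Proof.
move=> ji hi; have n_gt0 : (0 < n)%N by lia.
rewrite (bilin_of_bvecr c x (Ordinal n_gt0)) mxE (bigD1 i) //= big1 ?addr0 => [|l].
  by rewrite c_mu11 /mu11_c ?ifT ?mulr1 //; lia.
by rewrite -val_eqE /= => li; rewrite c_mu11 /mu11_c ?ifF ?mulr0 //; lia.
Qed.

Lemma mul_bvec1_eq0 x : mul x (e 1) = 0 -> exists a b, x = a *: e n.-1 + b *: e n.
Proof.
move=> hx; apply: row_span_top2 => [|i hi]; first lia.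
have hi1 : (i.+1 < n)%N by lia.
by rewrite -(mul_bvec1_shift x (j := Ordinal hi1)) //= ?hx ?mxE //; lia.
Qed.
End Mu11Products.

Section Cocycle.
Variables (K : fieldType) (n : nat) (c : nat -> nat -> nat -> K).
Hypothesis n_gt2 : (2 < n)%N.
Hypothesis c_mu11 : forall a b, (a != n) || (b != n) -> c a b =1 mu11_c K n a b.
Hypothesis two_neq0 : (2 : K) != 0.
Local Notation e := (bvec K n).
Local Notation mul := (bilin_of c : 'rV[K]_n -> 'rV[K]_n -> 'rV[K]_n).
Variable theta : 'rV[K]_n -> 'rV[K]_n -> 'rV[K]_n.
Hypothesis theta_Z2 : in_Z2 mul theta.

Let theta_bilinear : bilinear_for *:%R *:%R theta.
Proof. by case: theta_Z2 => thl thr *; split=> z a x y; rewrite ?thl ?thr. Qed.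
HB.instance Definition _ := bilinear_isBilinear.Build K _ _ _ _ _ theta theta_bilinear.

Lemma Z2_skew x y : theta x y = - theta y x.
Proof. by case: theta_Z2. Qed.

Lemma Z2_alt x : theta x x = 0.
Proof.
have : (2 : K) *: theta x x == 0 by rewrite scaler_nat mulr2n {2}Z2_skew subrr.
by rewrite scaler_eq0 (negbTE two_neq0) => /eqP.
Qed.

Lemma Z2_leibniz x y z : theta (mul x y) z = mul (theta x z) y + mul x (theta y z).
Proof.
by case: theta_Z2 => _ _ _ _ /(_ x y z) /eqP; rewrite -addrA -opprD subr_eq0 => /eqP.
Qed.

Lemma Z2_bvec_eq0 z :
  (forall k, (0 < k <= n.-2)%N -> mul (theta (e 1) z) (e k) = 0) ->
  mul (e 1) (theta (e 1) z) = 0 -> forall a, (1 < a < n)%N -> theta (e a) z = 0.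
Proof.
move=> hl hr; elim=> [//|a IH] ha.
rewrite -(mul_bvec1 n_gt2 c_mu11 ha) Z2_leibniz /=.
have [a1|a_gt1] := leqP a 1.
  have -> : a = 1%N by lia.
  by rewrite hl ?hr ?addr0 //; lia.
by rewrite hl ?IH ?linear0r ?addr0 //; lia.
Qed.

Lemma Z2_bvec1_eq0 z : theta (e 1) z = 0 -> forall a, (0 < a < n)%N -> theta (e a) z = 0.
Proof.
move=> h1 a ha; have [->|a1] := eqVneq a 1%N; first exact: h1.
by apply: Z2_bvec_eq0 => [k _||]; rewrite ?h1 ?linear0l ?linear0r //; lia.
Qed.

Lemma Z2_bvec_lt a b : (0 < a < n)%N -> (0 < b < n)%N -> theta (e a) (e b) = 0.
Proof.
move=> ha hb; apply: Z2_bvec1_eq0 => //.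
by rewrite Z2_skew Z2_bvec1_eq0 ?oppr0 ?Z2_alt.
Qed.

Lemma Z2_bvec1n_top : exists a b, theta (e 1) (e n) = a *: e n.-1 + b *: e n.
Proof.
apply: (mul_bvec1_eq0 n_gt2 c_mu11).
have := Z2_leibniz (e n) (e 1) (e 1).
rewrite (mul_bvecn1 n_gt2 c_mu11) linear0l Z2_alt linear0r addr0 Z2_skew linearNl.
by move/eqP; rewrite eq_sym oppr_eq0 => /eqP.
Qed.

Lemma Z2_bvec_n a : (1 < a < n)%N -> theta (e a) (e n) = 0.
Proof.
move=> ha; have [a' [b' w_top]] := Z2_bvec1n_top.
apply: (Z2_bvec_eq0 _ _ ha) => [k hk|]; rewrite w_top.
  by apply: mul_top_bvec => //; lia.
by apply: mul_bvec_top => //; lia.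
Qed.

Lemma Z2_bvec a b : (0 < a <= n)%N -> (0 < b <= n)%N ->
  theta (e a) (e b) = Delta_c K n a b *: theta (e 1) (e n).
Proof.
wlog ab : a b / (a <= b)%N => [hwlog ha hb|ha hb].
  have [ab|ba] := leqP a b; first exact: hwlog.
  rewrite Z2_skew (hwlog b a (ltnW ba) hb ha) -scaleNr /Delta_c opprB.
  by rewrite [(b == n) && _]andbC [(b == 1) && _]andbC.
rewrite /Delta_c; have [bn|->] : (b < n)%N \/ b = n by lia.
  by rewrite Z2_bvec_lt ?ifF ?subrr ?scale0r //; lia.
have [->|[a1|->]] : a = 1%N \/ (1 < a < n)%N \/ a = n by lia.
- by rewrite !eqxx /= ifF ?subr0 ?scale1r //; lia.
- by rewrite Z2_bvec_n ?ifF ?subrr ?scale0r //; lia.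
- by rewrite Z2_alt eqxx andbT andTb subrr scale0r.
Qed.

Lemma Z2_Delta x y : theta x y = Delta1n x y *: theta (e 1) (e n).
Proof.
rewrite {1}(row_bvec_sum x) {1}(row_bvec_sum y) linear_sumlz /Delta1n scaler_suml.
apply: eq_bigr => i _; rewrite linearZl_LR /= linear_sumr scaler_sumr scaler_suml.
apply: eq_bigr => j _.
by rewrite linearZr_LR /= Z2_bvec ?ltn_ord // !scalerA.
Qed.

Lemma Z2_bvec1n_sqr :
  mul (e n) (e n) = e n.-1 -> exists a, theta (e 1) (e n) = a *: e n.-1.
Proof.
move=> enn; have [a [b w_top]] := Z2_bvec1n_top.
exists a; suff b0 : b = 0 by rewrite w_top b0 scale0r addr0.
have := Z2_leibniz (e n) (e n) (e 1).
rewrite enn Z2_bvec_lt; [|lia|lia].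
rewrite (Z2_skew (e n)) w_top linearNl linearNr linearDl linearDr.
rewrite !linearZl_LR !linearZr_LR /= enn.
rewrite !(mul_bvec_off_nn n_gt2 c_mu11) ?ifF ?scaler0 ?add0r; try lia.
have en1_neq0 : e n.-1 != 0 by apply: bvec_neq0; lia.
move/eqP; rewrite -opprD -scalerDl eq_sym oppr_eq0 scaler_eq0 (negbTE en1_neq0) orbF.
by rewrite -mulr2n -mulr_natl mulf_eq0 (negbTE two_neq0) => /eqP.
Qed.
End Cocycle.

Section DeltaCocycle.
Variables (K : comNzRingType) (n : nat) (c : nat -> nat -> nat -> K).
Hypothesis n_gt0 : (0 < n)%N.
Hypotheses (c_1 : forall i j, c i j 1 = 0) (c_n : forall i j, c i j n = 0).
Local Notation e := (bvec K n).
Local Notation mul := (bilin_of c : 'rV[K]_n -> 'rV[K]_n -> 'rV[K]_n).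

Let i1 : 'I_n := Ordinal n_gt0.
Let iN : 'I_n := rev_ord i1.
Let iN_succ : iN.+1 = n. Proof. by rewrite /= subn1 prednK. Qed.

Lemma Delta1nE (x y : 'rV[K]_n) : Delta1n x y = x 0 i1 * y 0 iN - x 0 iN * y 0 i1.
Proof.
have DeltaE (l m : 'I_n) :
    Delta_c K n l.+1 m.+1 = (e 1) 0 l * (e n) 0 m - (e n) 0 l * (e 1) 0 m.
  by rewrite !mxE /Delta_c; do 4 case: (_ == _); rewrite ?(mulr1, mulr0).
rewrite /Delta1n; transitivity (
  \sum_l (e i1.+1) 0 l * (x 0 l * \sum_m (e iN.+1) 0 m * y 0 m)
  - \sum_l (e iN.+1) 0 l * (x 0 l * \sum_m (e i1.+1) 0 m * y 0 m)).
  rewrite -sumrB; apply: eq_bigr => l _; rewrite !mulr_sumr -sumrB.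
  by apply: eq_bigr => m _; rewrite iN_succ DeltaE; ring.
by rewrite !sum_bvec.
Qed.

Lemma bilin_of_coord1 x y : (mul x y) 0 i1 = 0.
Proof. by rewrite mxE big1 // => i _; rewrite big1 // => j _; rewrite c_1 mulr0. Qed.

Lemma bilin_of_coordN x y : (mul x y) 0 iN = 0.
Proof. by rewrite mxE big1 // => i _; rewrite big1 // => j _; rewrite iN_succ c_n mulr0. Qed.

Lemma Delta_scale_Z2 v theta : (forall y, mul v y = 0) -> (forall x, mul x v = 0) ->
  (forall x y, theta x y = Delta1n x y *: v) -> in_Z2 mul theta.
Proof.
move=> vl vr th_eq; split=> [a x y z|a x y z|x y|x y z|x y z]; rewrite !th_eq.
- by rewrite !Delta1nE !mxE scalerA -scalerDl; congr (_ *: _); ring.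
- by rewrite !Delta1nE !mxE scalerA -scalerDl; congr (_ *: _); ring.
- by rewrite -scaleNr !Delta1nE; congr (_ *: _); ring.
- by rewrite -!scalerDl !Delta1nE !mxE (_ : _ + _ = 0) ?scale0r //; ring.
- by rewrite !linearZl_LR !linearZr_LR /= vl vr Delta1nE bilin_of_coord1 bilin_of_coordN
    !mul0r subrr !scaler0 scale0r !subr0.
Qed.
End DeltaCocycle.

Lemma mu12_c_mu11 (K : pzRingType) n a b : (a != n) || (b != n) ->
  mu12_c K n a b =1 mu11_c K n a b.
Proof. by move=> ab k; rewrite /mu12_c /mu11_c; case: ifP => // _; rewrite ifF //; lia. Qed.

Lemma mu11_c_1 (K : pzRingType) n i j : mu11_c K n i j 1 = 0.
Proof. by rewrite /mu11_c; case: ifP => //; lia. Qed.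

Lemma mu11_c_n (K : pzRingType) n i j : mu11_c K n i j n = 0.
Proof. by rewrite /mu11_c; case: ifP => //; lia. Qed.

Lemma mu12_c_1 (K : pzRingType) n i j : (2 < n)%N -> mu12_c K n i j 1 = 0.
Proof. by move=> ?; rewrite /mu12_c; repeat case: ifP => ?; try done; lia. Qed.

Lemma mu12_c_n (K : pzRingType) n i j : (0 < n)%N -> mu12_c K n i j n = 0.
Proof. by move=> ?; rewrite /mu12_c; repeat case: ifP => ?; try done; lia. Qed.

Lemma Z2_mu11 (K : fieldType) (n : nat) : (2 < n)%N -> (2 : K) != 0 ->
  forall theta : 'rV[K]_n -> 'rV[K]_n -> 'rV[K]_n,
  in_Z2 (@mu11 K n) theta <->
  exists a b : K, forall x y, theta x y = (a * Delta1n x y) *: bvec K n n.-1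
                                        + (b * Delta1n x y) *: bvec K n n.
Proof.
move=> n_gt2 two_neq0 theta; have n_gt0 : (0 < n)%N by lia.
have c11 a b (_ : (a != n) || (b != n)) : mu11_c K n a b =1 mu11_c K n a b by [].
split=> [th_Z2 | [a [b th_eq]]].
  have [a [b w_top]] := Z2_bvec1n_top n_gt2 c11 two_neq0 th_Z2.
  exists a, b => x y; rewrite (Z2_Delta n_gt2 c11 two_neq0 th_Z2) w_top.
  by rewrite scalerDr !scalerA ![_ * Delta1n _ _]mulrC.
apply: (@Delta_scale_Z2 _ _ _ n_gt0 _ _ (a *: bvec K n n.-1 + b *: bvec K n n))
  => [i j|i j|y|x|x y].
- exact: mu11_c_1.
- exact: mu11_c_n.
- by rewrite linearDl !linearZl_LR /= !mul_bvec_eq0l ?scaler0 ?addr0 //; lia.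
- by rewrite linearDr !linearZr_LR /= !mul_bvec_eq0r ?scaler0 ?addr0 //; lia.
- by rewrite th_eq scalerDr !scalerA ![Delta1n _ _ * _]mulrC.
Qed.

Lemma Z2_mu12 (K : fieldType) (n : nat) : (2 < n)%N -> (2 : K) != 0 ->
  forall theta : 'rV[K]_n -> 'rV[K]_n -> 'rV[K]_n,
  in_Z2 (@mu12 K n) theta <->
  exists a : K, forall x y, theta x y = (a * Delta1n x y) *: bvec K n n.-1.
Proof.
move=> n_gt2 two_neq0 theta; have n_gt0 : (0 < n)%N by lia.
have c12 := @mu12_c_mu11 K n.
split=> [th_Z2 | [a th_eq]].
  have enn : @mu12 K n (bvec K n n) (bvec K n n) = bvec K n n.-1.
    rewrite /mu12 bilin_of_bvec; try lia.
    by apply/rowP => k; rewrite !mxE /mu12_c; repeat case: ifP => ?; try done; lia.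
  have [a w_top] := Z2_bvec1n_sqr n_gt2 c12 two_neq0 th_Z2 enn.
  exists a => x y; rewrite (Z2_Delta n_gt2 c12 two_neq0 th_Z2) w_top.
  by rewrite scalerA mulrC.
apply: (@Delta_scale_Z2 _ _ _ n_gt0 _ _ (a *: bvec K n n.-1)) => [i j|i j|y|x|x y].
- exact: mu12_c_1.
- exact: mu12_c_n.
- by rewrite linearZl_LR /= mul_bvec_eq0l ?scaler0 // => [|b]; [lia | apply: c12; lia].
- by rewrite linearZr_LR /= mul_bvec_eq0r ?scaler0 // => [|b]; [lia | apply: c12; lia].
- by rewrite th_eq scalerA mulrC.
Qed.

Theorem lemma3p7 (R : realType) (n : nat) (hn : (3 < n)%N) :
  (forall theta : 'rV[R[i]]_n -> 'rV[R[i]]_n -> 'rV[R[i]]_n,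
     in_Z2 (@mu11 R[i] n) theta <->
     exists alpha beta : R[i], forall x y,
       theta x y = (alpha * Delta1n x y) *: bvec R[i] n n.-1
                   + (beta * Delta1n x y) *: bvec R[i] n n) /\
  (forall theta : 'rV[R[i]]_n -> 'rV[R[i]]_n -> 'rV[R[i]]_n,
     in_Z2 (@mu12 R[i] n) theta <->
     exists alpha : R[i], forall x y,
       theta x y = (alpha * Delta1n x y) *: bvec R[i] n n.-1).
Proof.
have n_gt2 : (2 < n)%N by lia.
have two_neq0 : (2 : R[i]) != 0 by rewrite pnatr_eq0.
by split; [exact: Z2_mu11 | exact: Z2_mu12].
Qed.
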